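(* Let $P$ be a strange polytope with apices $v_1,v_2$ and base $Q=\mathrm{conv}\{o,v_3,v_4,v_5,v_6\}$. (i) If $\|v_i\|\ge 6.5$ for some $i\in\{3,4,5,6\}$, then $\dfrac{S(P)^3}{V(P)^2}>188$. (ii) If $\|v_i\|\ge 17$ for some $i\in\{3,4,5,6\}$, then $\dfrac{S(P)^3}{V(P)^2}>344$.
   Context: $S$, $V$ denote surface area and volume. Strange polytope: a polytope $P=\mathrm{conv}(Q\cup\{v_1,v_2\})$ where $v_1$ is a unit vector, $v_2=-v_1$, $Q=\mathrm{conv}\{o,v_3,v_4,v_5,v_6\}\subset v_1^\perp$ is a convex polygon ($o$ the origin), and either $Q$ is a triangle, or $o$ lies on the relative boundary of $Q$ and $v_3,v_4,v_5,v_6$ are vertices of both $Q$ and $P$; $v_1,v_2$ are its apices and $Q$ its base. *)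

From Stdlib Require Import Reals Lra List Arith.
Import ListNotations.
Open Scope R_scope.

Definition vec : Type := (R * R * R)%type.
Definition vx (v : vec) : R := fst (fst v).
Definition vy (v : vec) : R := snd (fst v).
Definition vz (v : vec) : R := snd v.
Definition mkv (a b c : R) : vec := (a, b, c).
Definition vzero : vec := mkv 0 0 0.
Definition vadd (u v : vec) : vec := mkv (vx u + vx v) (vy u + vy v) (vz u + vz v).
Definition vsub (u v : vec) : vec := mkv (vx u - vx v) (vy u - vy v) (vz u - vz v).
Definition vscale (t : R) (v : vec) : vec := mkv (t * vx v) (t * vy v) (t * vz v).
Definition vopp (v : vec) : vec := vscale (-1) v.
Definition dot (u v : vec) : R := vx u * vx v + vy u * vy v + vz u * vz v.
Definition cross (u v : vec) : vec :=
  mkv (vy u * vz v - vz u * vy v) (vz u * vx v - vx u * vz v) (vx u * vy v - vy u * vx v).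
Definition norm (v : vec) : R := sqrt (dot v v).
Definition det3 (a b c : vec) : R := dot a (cross b c).

Fixpoint sumR (l : list R) : R := match l with [] => 0 | x :: l' => x + sumR l' end.

Fixpoint lincomb (ls : list R) (ps : list vec) : vec :=
  match ls, ps with
  | l :: ls', p :: ps' => vadd (vscale l p) (lincomb ls' ps')
  | _, _ => vzero
  end.

Definition conv (ps : list vec) (x : vec) : Prop :=
  exists ls : list R, length ls = length ps /\ Forall (fun l => 0 <= l) ls /\
    sumR ls = 1 /\ x = lincomb ls ps.

Definition extreme_point (X : vec -> Prop) (x : vec) : Prop :=
  X x /\ forall a b t, X a -> X b -> 0 < t < 1 ->
    x = vadd (vscale (1 - t) a) (vscale t b) -> a = x /\ b = x.

(* relative boundary of a set X whose affine hull is the plane v1^perp *)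
Definition rel_boundary_in_plane (v1 : vec) (X : vec -> Prop) (x : vec) : Prop :=
  X x /\ forall eps, 0 < eps -> exists y, dot y v1 = 0 /\ norm (vsub y x) < eps /\ ~ X y.

Definition cyc (L : list vec) (i : nat) : vec := nth (i mod length L) L vzero.

(* L lists the vertices of the convex polygon X (lying in v1^perp), in strictly
   convex counterclockwise order when viewed from v1. *)
Definition vertex_cycle (v1 : vec) (X : vec -> Prop) (L : list vec) : Prop :=
  (3 <= length L)%nat /\ Forall (fun w => dot w v1 = 0) L /\
  (forall i j, (i < length L)%nat -> (j < length L)%nat -> j <> i ->
     j <> (S i) mod length L ->
     0 < det3 (vsub (cyc L (S i)) (cyc L i)) (vsub (cyc L j) (cyc L i)) v1) /\
  (forall x, X x <-> conv L x).

Definition tri_area (a b c : vec) : R := / 2 * norm (cross (vsub b a) (vsub c a)).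

(* Surface area of the bipyramid conv(Q ∪ {v1, -v1}) where Q has vertex cycle L:
   its facets are the triangles conv{w_i, w_(i+1), ±v1}. *)
Definition bipyr_surface (v1 : vec) (L : list vec) : R :=
  sumR (map (fun i => tri_area (cyc L i) (cyc L (S i)) v1
                    + tri_area (cyc L i) (cyc L (S i)) (vopp v1))
            (seq 0 (length L))).

(* Volume of the same bipyramid, triangulated from the origin o ∈ Q into the
   tetrahedra conv{o, w_i, w_(i+1), ±v1}. *)
Definition bipyr_volume (v1 : vec) (L : list vec) : R :=
  sumR (map (fun i => (Rabs (det3 (cyc L i) (cyc L (S i)) v1)
                     + Rabs (det3 (cyc L i) (cyc L (S i)) (vopp v1))) / 6)
            (seq 0 (length L))).

Definition baseQ (v3 v4 v5 v6 : vec) : vec -> Prop := conv [vzero; v3; v4; v5; v6].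
Definition polyP (v1 v3 v4 v5 v6 : vec) : vec -> Prop :=
  conv [v1; vopp v1; vzero; v3; v4; v5; v6].

(* P = conv(Q ∪ {v1, v2}) is a strange polytope with apices v1, v2 = -v1 *)
Definition strange_polytope (v1 v3 v4 v5 v6 : vec) : Prop :=
  norm v1 = 1 /\
  dot v3 v1 = 0 /\ dot v4 v1 = 0 /\ dot v5 v1 = 0 /\ dot v6 v1 = 0 /\
  (exists L, vertex_cycle v1 (baseQ v3 v4 v5 v6) L) /\
  (
    (exists a b c, cross (vsub b a) (vsub c a) <> vzero /\
        forall x, baseQ v3 v4 v5 v6 x <-> conv [a; b; c] x)
  \/ (rel_boundary_in_plane v1 (baseQ v3 v4 v5 v6) vzero /\
      Forall (fun v => extreme_point (baseQ v3 v4 v5 v6) v /\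
                       extreme_point (polyP v1 v3 v4 v5 v6) v) [v3; v4; v5; v6])).

(* With D_i = det(w_i, w_(i+1), v1), the two facets over an edge of length l_i have
   total area sqrt(l_i^2 + D_i^2), while the two tetrahedra conv{o, w_i, w_(i+1), ±v1}
   have volume |D_i| / 3.  Minkowski's inequality gives S >= sqrt(p^2 + D^2) with
   p the perimeter of Q and D = sum |D_i| > 0, and V = D / 3.  Hence
   S^3 / V^2 >= 9 (p^2 + D^2)^(3/2) / D^2 >= 18 p, and p >= 2 |v| for every v in Q
   because o is in Q.  So S^3 / V^2 >= 36 |v|, and 36 * 6.5 > 188, 36 * 17 > 344. *)
From Stdlib Require Import Reals List Lra Lia.
Import ListNotations.
Open Scope R_scope.

Ltac vec_unfold :=
  unfold det3, dot, cross, vopp, vsub, vadd, vscale, mkv, vzero in *;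
  unfold vx, vy, vz in *; simpl in *.
Ltac vec_destruct := repeat match goal with v : vec |- _ => destruct v as [[? ?] ?] end.
Ltac vec_ring := vec_destruct; vec_unfold; ring.
Ltac vec_eq :=
  vec_destruct; vec_unfold;
  apply pair_equal_spec; split; [apply pair_equal_spec; split |]; ring.

Lemma sqrt_le_of_le_sq x y : 0 <= y -> x <= y ^ 2 -> sqrt x <= y.
Proof. intros. rewrite <- (sqrt_pow2 y) by lra. apply sqrt_le_1_alt; lra. Qed.

Lemma le_sqrt_of_sq_le x Y : x ^ 2 <= Y -> x <= sqrt Y.
Proof.
  intros h. destruct (Rle_dec x 0); [pose proof (sqrt_pos Y); lra|].
  rewrite <- (sqrt_pow2 x) by lra. apply sqrt_le_1_alt; lra.
Qed.

Lemma cube_sqrt_sum_sq_ge p D : 0 <= p -> 0 < D -> 2 * p * D ^ 2 <= sqrt (p ^ 2 + D ^ 2) ^ 3.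
Proof.
  intros hp hD. set (s := sqrt (p ^ 2 + D ^ 2)).
  assert (hs2 : s ^ 2 = p ^ 2 + D ^ 2) by (apply pow2_sqrt; nra).
  assert (hsD : D <= s) by (apply le_sqrt_of_sq_le; nra).
  assert (h2pD : 2 * p * D <= s ^ 2) by (pose proof (pow2_ge_0 (p - D)); nra).
  replace (s ^ 3) with (s ^ 2 * s) by ring.
  replace (2 * p * D ^ 2) with (2 * p * D * D) by ring.
  apply Rmult_le_compat; nra.
Qed.

Lemma dot_self_ge0 v : 0 <= dot v v.
Proof. vec_destruct; vec_unfold; nra. Qed.

Lemma dot_cross_cross u v : dot (cross u v) (cross u v) = dot u u * dot v v - (dot u v) ^ 2.
Proof. vec_ring. Qed.

Lemma norm_ge0 v : 0 <= norm v.
Proof. apply sqrt_pos. Qed.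

Lemma norm_sq v : norm v ^ 2 = dot v v.
Proof. apply pow2_sqrt, dot_self_ge0. Qed.

Lemma dot_le_norm_mul u v : dot u v <= norm u * norm v.
Proof.
  unfold norm. rewrite <- sqrt_mult by apply dot_self_ge0.
  apply le_sqrt_of_sq_le.
  pose proof (dot_cross_cross u v). pose proof (dot_self_ge0 (cross u v)). lra.
Qed.

Lemma norm_add_le u v : norm (vadd u v) <= norm u + norm v.
Proof.
  apply sqrt_le_of_le_sq; [pose proof (norm_ge0 u); pose proof (norm_ge0 v); lra|].
  pose proof (dot_le_norm_mul u v). pose proof (norm_sq u). pose proof (norm_sq v).
  assert (dot (vadd u v) (vadd u v) = dot u u + dot v v + 2 * dot u v) by vec_ring.
  nra.
Qed.

Lemma norm_scale t v : norm (vscale t v) = Rabs t * norm v.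
Proof.
  unfold norm. replace (dot (vscale t v) (vscale t v)) with (t ^ 2 * dot v v) by vec_ring.
  rewrite sqrt_mult, <- pow2_abs, sqrt_pow2;
    auto using pow2_ge_0, Rabs_pos, dot_self_ge0.
Qed.

Lemma norm_subC a b : norm (vsub a b) = norm (vsub b a).
Proof. unfold norm. f_equal. vec_ring. Qed.

Lemma norm_sub0 v : norm (vsub v vzero) = norm v.
Proof. unfold norm. f_equal. vec_ring. Qed.

Lemma norm_subvv a : norm (vsub a a) = 0.
Proof. unfold norm. replace (dot (vsub a a) (vsub a a)) with 0 by vec_ring. apply sqrt_0. Qed.

Lemma norm_sub_triangle x y z : norm (vsub x z) <= norm (vsub x y) + norm (vsub y z).
Proof. replace (vsub x z) with (vadd (vsub x y) (vsub y z)) by vec_eq. apply norm_add_le. Qed.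

Lemma sumR_app l1 l2 : sumR (l1 ++ l2) = sumR l1 + sumR l2.
Proof. induction l1; simpl; lra. Qed.

Lemma sumR_map_le {A} (f g : A -> R) l :
  (forall x, In x l -> f x <= g x) -> sumR (map f l) <= sumR (map g l).
Proof.
  induction l as [|a l IH]; simpl; intros h; [lra|].
  pose proof (h a (or_introl eq_refl)). pose proof (IH (fun x hx => h x (or_intror hx))). lra.
Qed.

Lemma sumR_map_ext {A} (f g : A -> R) l :
  (forall x, In x l -> f x = g x) -> sumR (map f l) = sumR (map g l).
Proof. intros h. apply Rle_antisym; apply sumR_map_le; intros x hx; rewrite h; auto; lra. Qed.

Lemma sumR_map_add {A} (f g : A -> R) l :
  sumR (map (fun x => f x + g x) l) = sumR (map f l) + sumR (map g l).
Proof. induction l; simpl; lra. Qed.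

Lemma sumR_map_div {A} (f : A -> R) c l : sumR (map (fun x => f x / c) l) = sumR (map f l) / c.
Proof. induction l; simpl; [|rewrite IHl]; unfold Rdiv; ring. Qed.

Lemma sumR_map_ge0 {A} (f : A -> R) l : (forall x, In x l -> 0 <= f x) -> 0 <= sumR (map f l).
Proof.
  induction l as [|a l IH]; simpl; intros h; [lra|].
  pose proof (h a (or_introl eq_refl)). pose proof (IH (fun x hx => h x (or_intror hx))). lra.
Qed.

Lemma sumR_map_ge_In {A} (f : A -> R) l x :
  (forall y, In y l -> 0 <= f y) -> In x l -> f x <= sumR (map f l).
Proof.
  induction l as [|a l IH]; simpl; intros h hx; [contradiction|].
  pose proof (IH (fun y hy => h y (or_intror hy))) as hIH.
  pose proof (sumR_map_ge0 f l (fun y hy => h y (or_intror hy))).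
  pose proof (h a (or_introl eq_refl)).
  destruct hx as [<-|hx]; [|specialize (hIH hx)]; lra.
Qed.

Lemma sumR_telescope (h : nat -> R) n : sumR (map (fun i => h (S i) - h i) (seq 0 n)) = h n - h 0%nat.
Proof. induction n; [simpl; lra|]. rewrite seq_S, map_app, sumR_app, IHn. simpl. lra. Qed.

Lemma sumR_minkowski {A} (f g : A -> R) l :
  sqrt ((sumR (map f l)) ^ 2 + (sumR (map g l)) ^ 2)
  <= sumR (map (fun x => sqrt (f x ^ 2 + g x ^ 2)) l).
Proof.
  induction l as [|a l IH]; cbn [map sumR]; [apply sqrt_le_of_le_sq; nra|].
  set (F := sumR (map f l)) in *. set (G := sumR (map g l)) in *.
  set (r := sqrt (f a ^ 2 + g a ^ 2)). set (R0 := sqrt (F ^ 2 + G ^ 2)) in *.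
  enough (sqrt ((f a + F) ^ 2 + (g a + G) ^ 2) <= r + R0) by lra.
  pose proof (sqrt_pos (f a ^ 2 + g a ^ 2)). pose proof (sqrt_pos (F ^ 2 + G ^ 2)).
  apply sqrt_le_of_le_sq; [unfold r, R0 in *; lra|].
  pose proof (sqrt_cauchy (f a) (g a) F G) as hcs. unfold Rsqr in hcs.
  assert (hr : r ^ 2 = f a ^ 2 + g a ^ 2) by (apply pow2_sqrt; nra).
  assert (hR : R0 ^ 2 = F ^ 2 + G ^ 2) by (apply pow2_sqrt; nra).
  replace (f a * f a + g a * g a) with (f a ^ 2 + g a ^ 2) in hcs by ring.
  replace (F * F + G * G) with (F ^ 2 + G ^ 2) in hcs by ring.
  fold r R0 in hcs. nra.
Qed.

Lemma lincomb_zeros ps : lincomb (map (fun _ => 0) ps) ps = vzero.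
Proof. induction ps; simpl; auto. rewrite IHps. vec_eq. Qed.

Lemma conv_In ps x : In x ps -> conv ps x.
Proof.
  induction ps as [|a ps IH]; simpl; intros H; [contradiction|].
  destruct H as [<-|H].
  - exists (1 :: map (fun _ => 0) ps). repeat split.
    + simpl. rewrite length_map. reflexivity.
    + constructor; [lra|]. apply Forall_forall. intros y hy.
      apply in_map_iff in hy. destruct hy as [? [<- _]]. lra.
    + simpl. enough (sumR (map (fun _ => 0) ps) = 0) by lra.
      clear IH; induction ps; simpl; lra.
    + simpl. rewrite lincomb_zeros. vec_eq.
  - destruct (IH H) as [ls [h1 [h2 [h3 h4]]]].
    exists (0 :: ls). repeat split; simpl; auto; try lra.
    + constructor; auto; lra.
    + rewrite <- h4. vec_eq.
Qed.

Lemma lincomb_dist_le ls ps c M :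
  length ls = length ps -> Forall (fun l => 0 <= l) ls ->
  (forall w, In w ps -> norm (vsub w c) <= M) ->
  norm (vsub (lincomb ls ps) (vscale (sumR ls) c)) <= sumR ls * M.
Proof.
  revert ls. induction ps as [|p ps IH]; intros ls hlen hnn hM;
    destruct ls as [|l ls]; simpl in hlen; try discriminate.
  - simpl. replace (vsub vzero (vscale 0 c)) with (vsub vzero vzero) by vec_eq.
    rewrite norm_subvv. lra.
  - inversion hnn; subst. cbn [lincomb sumR].
    replace (vsub (vadd (vscale l p) (lincomb ls ps)) (vscale (l + sumR ls) c))
      with (vadd (vscale l (vsub p c)) (vsub (lincomb ls ps) (vscale (sumR ls) c))) by vec_eq.
    eapply Rle_trans; [apply norm_add_le|]. rewrite norm_scale, Rabs_pos_eq by auto.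
    pose proof (hM p (or_introl eq_refl)).
    pose proof (IH ls ltac:(lia) ltac:(assumption) (fun w hw => hM w (or_intror hw))).
    nra.
Qed.

Lemma conv_dist_le ps x c M :
  conv ps x -> (forall w, In w ps -> norm (vsub w c) <= M) -> norm (vsub x c) <= M.
Proof.
  intros [ls [h1 [h2 [h3 ->]]]] hM.
  pose proof (lincomb_dist_le ls ps c M h1 h2 hM) as h. rewrite h3 in h.
  replace (vscale 1 c) with c in h by vec_eq. lra.
Qed.

Section Polygon.

Variable L : list vec.
Hypothesis L_nonempty : (0 < length L)%nat.

Lemma cyc_In i : In (cyc L i) L.
Proof. apply nth_In, Nat.mod_upper_bound. lia. Qed.

Lemma cyc_length : cyc L (length L) = cyc L 0.
Proof. unfold cyc. rewrite Nat.Div0.mod_same, Nat.Div0.mod_0_l. reflexivity. Qed.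

Lemma cyc_small i : (i < length L)%nat -> cyc L i = nth i L vzero.
Proof. intros. unfold cyc. rewrite Nat.mod_small; auto. Qed.

Definition edge_length i := norm (vsub (cyc L (S i)) (cyc L i)).

Definition perimeter := sumR (map edge_length (seq 0 (length L))).

Lemma chord_le_path a m :
  norm (vsub (cyc L (a + m)) (cyc L a)) <= sumR (map edge_length (seq a m)).
Proof.
  induction m.
  - rewrite Nat.add_0_r, norm_subvv. simpl. lra.
  - rewrite seq_S, map_app, sumR_app. simpl.
    eapply Rle_trans; [apply (norm_sub_triangle _ (cyc L (a + m)))|].
    rewrite Nat.add_succ_r. unfold edge_length at 2. lra.
Qed.

Lemma chord_le_half_perimeter i j :
  (i <= j <= length L)%nat -> 2 * norm (vsub (cyc L j) (cyc L i)) <= perimeter.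
Proof.
  intros hij. unfold perimeter.
  replace (length L) with (i + ((j - i) + (length L - j)))%nat by lia.
  rewrite !seq_app, !map_app, !sumR_app.
  pose proof (chord_le_path 0 i) as h1.
  pose proof (chord_le_path i (j - i)) as h2.
  pose proof (chord_le_path j (length L - j)) as h3.
  replace (0 + i)%nat with i in * by lia.
  replace (i + (j - i))%nat with j in * by lia.
  replace (j + (length L - j))%nat with (length L) in * by lia.
  rewrite cyc_length in h3.
  pose proof (norm_sub_triangle (cyc L i) (cyc L 0) (cyc L j)).
  rewrite (norm_subC (cyc L i) (cyc L j)) in *.
  lra.
Qed.

Lemma vertex_dist_le_half_perimeter w w' :
  In w L -> In w' L -> 2 * norm (vsub w w') <= perimeter.
Proof.
  intros h h'.
  destruct (In_nth L w vzero h) as [k [hk <-]].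
  destruct (In_nth L w' vzero h') as [k' [hk' <-]].
  rewrite <- !cyc_small by auto.
  destruct (Nat.le_ge_cases k' k).
  - apply chord_le_half_perimeter. lia.
  - rewrite norm_subC. apply chord_le_half_perimeter. lia.
Qed.

Lemma conv_dist_le_half_perimeter x y :
  conv L x -> conv L y -> 2 * norm (vsub x y) <= perimeter.
Proof.
  intros hx hy.
  enough (norm (vsub x y) <= perimeter / 2) by lra.
  apply (conv_dist_le L x y); auto. intros w hw.
  rewrite norm_subC. apply (conv_dist_le L y w); auto. intros w' hw'.
  pose proof (vertex_dist_le_half_perimeter w' w hw' hw). lra.
Qed.

End Polygon.

Definition fan_det v1 L i := det3 (cyc L i) (cyc L (S i)) v1.

Definition sum_abs_fan_det v1 L := sumR (map (fun i => Rabs (fan_det v1 L i)) (seq 0 (length L))).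

Lemma det3_fan_shift a b c v :
  det3 a b v = det3 (vsub b a) (vsub c a) v + (det3 c b v - det3 c a v).
Proof. vec_ring. Qed.

Lemma det3_vsubvv_r x a v : det3 x (vsub a a) v = 0.
Proof. vec_ring. Qed.

Lemma det3_diag x v : det3 x x v = 0.
Proof. vec_ring. Qed.

(* The signed fan sum does not depend on the apex, so it equals the fan sum from
   the vertex w_0, whose terms are all nonnegative by strict convexity. *)
Lemma sum_fan_det_pos v1 X L :
  vertex_cycle v1 X L -> 0 < sumR (map (fan_det v1 L) (seq 0 (length L))).
Proof.
  intros [hn [_ [hconvex _]]].
  set (n := length L) in *. set (c := cyc L 0).
  set (g := fun i => det3 (vsub (cyc L (S i)) (cyc L i)) (vsub c (cyc L i)) v1).
  set (h := fun i => det3 c (cyc L i) v1).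
  rewrite (sumR_map_ext _ (fun i => g i + (h (S i) - h i))).
  2:{ intros i _. apply det3_fan_shift. }
  rewrite sumR_map_add, sumR_telescope.
  assert (hh : h n = h 0%nat) by (unfold h, n; rewrite cyc_length by lia; reflexivity).
  assert (hg0 : forall i, In i (seq 0 n) -> 0 <= g i).
  { intros i hi. apply in_seq in hi.
    destruct (Nat.eq_dec i 0) as [->|]; [unfold g, c; rewrite det3_vsubvv_r; lra|].
    destruct (Nat.eq_dec (S i) n) as [e|].
    - unfold g. rewrite e. unfold n. rewrite cyc_length by lia. rewrite det3_diag. lra.
    - left. apply hconvex; fold n; rewrite ?Nat.mod_small; lia. }
  assert (hg1 : 0 < g 1%nat) by (apply hconvex; fold n; rewrite ?Nat.mod_small; lia).
  pose proof (sumR_map_ge_In g (seq 0 n) 1%nat hg0 ltac:(apply in_seq; lia)).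
  lra.
Qed.

Lemma sum_abs_fan_det_pos v1 X L : vertex_cycle v1 X L -> 0 < sum_abs_fan_det v1 L.
Proof.
  intros hL. eapply Rlt_le_trans; [apply (sum_fan_det_pos v1 X L hL)|].
  apply sumR_map_le. intros. apply Rle_abs.
Qed.

Lemma dot_cross_cross_orth a b v :
  dot a v = 0 -> dot b v = 0 -> dot v v = 1 -> dot (cross a b) (cross a b) = (det3 a b v) ^ 2.
Proof.
  intros ha hb hv.
  pose proof (dot_cross_cross (cross a b) v) as h.
  replace (cross (cross a b) v) with (vsub (vscale (dot a v) b) (vscale (dot b v) a)) in h
    by vec_eq.
  rewrite ha, hb, hv in h.
  replace (det3 a b v) with (dot (cross a b) v) by vec_ring.
  replace (dot (vsub (vscale 0 b) (vscale 0 a)) (vsub (vscale 0 b) (vscale 0 a))) with 0 in h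
    by vec_ring.
  lra.
Qed.

Lemma tri_area_apex a b v :
  dot a v = 0 -> dot b v = 0 -> dot v v = 1 ->
  tri_area a b v = / 2 * sqrt (norm (vsub b a) ^ 2 + (det3 a b v) ^ 2).
Proof.
  intros ha hb hv. unfold tri_area, norm at 1. rewrite norm_sq, dot_cross_cross.
  rewrite <- (dot_cross_cross_orth a b v ha hb hv).
  replace (dot (vsub v a) (vsub v a)) with (dot v v - 2 * dot a v + dot a a) by vec_ring.
  replace (dot (vsub b a) (vsub v a)) with (dot b v - dot a v - dot (vsub b a) a) by vec_ring.
  replace (dot (cross a b) (cross a b)) with (dot (cross (vsub b a) a) (cross (vsub b a) a))
    by vec_ring.
  rewrite ha, hb, hv, dot_cross_cross. f_equal. f_equal. ring.
Qed.

Lemma facet_pair_area a b v :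
  dot a v = 0 -> dot b v = 0 -> dot v v = 1 ->
  tri_area a b v + tri_area a b (vopp v) = sqrt (norm (vsub b a) ^ 2 + (det3 a b v) ^ 2).
Proof.
  intros ha hb hv.
  assert (hopp : forall u, dot u (vopp v) = - dot u v) by (intros; vec_ring).
  assert (hvv : dot (vopp v) (vopp v) = dot v v) by vec_ring.
  rewrite !tri_area_apex; rewrite ?hvv, ?hopp; try lra.
  replace (det3 a b (vopp v)) with (- det3 a b v) by vec_ring.
  replace ((- det3 a b v) ^ 2) with (det3 a b v ^ 2) by ring.
  field.
Qed.

Lemma bipyr_surface_ge v1 L :
  dot v1 v1 = 1 -> (0 < length L)%nat -> Forall (fun w => dot w v1 = 0) L ->
  sqrt (perimeter L ^ 2 + sum_abs_fan_det v1 L ^ 2) <= bipyr_surface v1 L.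
Proof.
  intros hv hn hL. rewrite Forall_forall in hL.
  eapply Rle_trans; [apply sumR_minkowski|]. right. apply sumR_map_ext. intros i _.
  rewrite facet_pair_area by auto using cyc_In.
  unfold edge_length, fan_det. rewrite pow2_abs. reflexivity.
Qed.

Lemma bipyr_volume_eq v1 L : bipyr_volume v1 L = sum_abs_fan_det v1 L / 3.
Proof.
  unfold bipyr_volume, sum_abs_fan_det. rewrite <- sumR_map_div. apply sumR_map_ext.
  intros i _. replace (det3 (cyc L i) (cyc L (S i)) (vopp v1)) with (- fan_det v1 L i) by
    (unfold fan_det; vec_ring).
  rewrite Rabs_Ropp. unfold fan_det. field.
Qed.

Lemma bipyr_ratio_ge v1 X L v :
  norm v1 = 1 -> vertex_cycle v1 X L -> X vzero -> X v ->
  36 * norm v <= bipyr_surface v1 L ^ 3 / bipyr_volume v1 L ^ 2.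
Proof.
  intros hv1 hL h0 hv.
  assert (hv1' : dot v1 v1 = 1) by (rewrite <- norm_sq, hv1; ring).
  pose proof (sum_abs_fan_det_pos v1 X L hL) as hD.
  destruct hL as [hn [horth [_ hX]]].
  set (p := perimeter L). set (D := sum_abs_fan_det v1 L) in *.
  assert (hp : 2 * norm v <= p).
  { rewrite <- norm_sub0. apply conv_dist_le_half_perimeter; [lia | apply hX; auto ..]. }
  pose proof (bipyr_surface_ge v1 L hv1' ltac:(lia) horth) as hS. fold p D in hS.
  pose proof (cube_sqrt_sum_sq_ge p D ltac:(pose proof (norm_ge0 v); lra) hD) as hcube.
  rewrite bipyr_volume_eq.
  apply Rle_trans with (18 * p); [lra|].
  replace (18 * p) with (2 * p * D ^ 2 / (D / 3) ^ 2) by (field; lra).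
  assert (hV : 0 < (D / 3) ^ 2) by (apply pow_lt; lra).
  apply Rmult_le_compat_r; [apply Rlt_le, Rinv_0_lt_compat, hV|].
  eapply Rle_trans; [apply hcube|]. apply pow_incr. split; [apply sqrt_pos | exact hS].
Qed.

Theorem mainTheorem9 (v1 v3 v4 v5 v6 : vec) :
  strange_polytope v1 v3 v4 v5 v6 ->
  forall L : list vec, vertex_cycle v1 (baseQ v3 v4 v5 v6) L ->
  (Exists (fun v => 13 / 2 <= norm v) [v3; v4; v5; v6] ->
     bipyr_surface v1 L ^ 3 / bipyr_volume v1 L ^ 2 > 188) /\
  (Exists (fun v => 17 <= norm v) [v3; v4; v5; v6] ->
     bipyr_surface v1 L ^ 3 / bipyr_volume v1 L ^ 2 > 344).
Proof.
  intros [hv1 _] L hL.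
  assert (hratio : forall v, In v [v3; v4; v5; v6] ->
            36 * norm v <= bipyr_surface v1 L ^ 3 / bipyr_volume v1 L ^ 2).
  { intros v hv. apply (bipyr_ratio_ge v1 (baseQ v3 v4 v5 v6)); auto;
      apply conv_In; simpl; auto. }
  split; intros hE; apply Exists_exists in hE; destruct hE as [v [hin hK]];
    pose proof (hratio v hin); lra.
Qed.
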